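(* Let $P$ and $Q$ be distinct planes in $\mathbb{H}^4$ intersecting in a line. Then $H_PH_Q$ is a type-I elliptic isometry whose twisting plane is orthogonal to the hyperplane containing $P\cup Q$ through $P\cap Q$.
   Context: A plane is a $2$-dimensional totally geodesic subspace of $\mathbb{H}^4$. For a plane $P$, the half-turn $H_P$ is the composition of reflections in two orthogonal hyperplanes intersecting in $P$. A type-I elliptic isometry is a composition of reflections in two distinct hyperplanes intersecting in a plane; its fixed-point set, a plane, is called its twisting plane. *)

(* hyperboloid model of H^4 inside R^{4,1}. *)
From HB Require Import structures.
From mathcomp Require Import all_boot all_order all_algebra.
Set Implicit Arguments. Unset Strict Implicit. Unset Printing Implicit Defensive.
Import Order.TTheory GRing.Theory Num.Theory.
Local Open Scope ring_scope.

Section H4.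
Variable R : realFieldType.

(* Vectors of R^5 = R^{4,1}; coordinates 0..3 spacelike, coordinate 4 timelike. *)
Definition vec := 'rV[R]_5.

Definition minkJ : 'M[R]_5 :=
  diag_mx (\row_(i < 5) (if i == ord_max then -1 else 1)).

Definition mink (x y : vec) : R := (x *m minkJ *m y^T) 0 0.

Definition hyp (x : vec) : Prop := mink x x = -1 /\ 0 < x 0 ord_max.

Definition hset := vec -> Prop.

Definition seteq (A B : hset) : Prop := forall x, A x <-> B x.
Definition hsubs (A B : hset) : Prop := forall x, A x -> B x.
Definition hinter (A B : hset) : hset := fun x => A x /\ B x.

(* k-dimensional totally geodesic subspace of H^4: nonempty intersection of
   H^4 with a (k+1)-dimensional linear subspace of R^{4,1}. *)
Definition tg_subspace (k : nat) (A : hset) : Prop :=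
  exists V : 'M[R]_5, \rank V = k.+1 /\ (exists x, hyp x /\ (x <= V)%MS) /\
    seteq A (fun x => hyp x /\ (x <= V)%MS).

Definition is_line := tg_subspace 1.
Definition is_plane := tg_subspace 2.
Definition is_hyperplane := tg_subspace 3.

Definition normal_of (n : vec) (H : hset) : Prop :=
  0 < mink n n /\ seteq H (fun x => hyp x /\ mink x n = 0).

Definition hrefl (n x : vec) : vec := x - ((2 * mink x n) / mink n n) *: n.

Definition is_half_turn (P : hset) (h : vec -> vec) : Prop :=
  exists (H1 H2 : hset) (n1 n2 : vec),
    normal_of n1 H1 /\ normal_of n2 H2 /\ mink n1 n2 = 0 /\
    seteq (hinter H1 H2) P /\ forall x, h x = hrefl n1 (hrefl n2 x).

Definition type_I_elliptic (f : vec -> vec) : Prop :=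
  exists (H1 H2 : hset) (n1 n2 : vec),
    normal_of n1 H1 /\ normal_of n2 H2 /\ ~ seteq H1 H2 /\
    is_plane (hinter H1 H2) /\ forall x, hyp x -> f x = hrefl n1 (hrefl n2 x).

Definition fixpts (f : vec -> vec) : hset := fun x => hyp x /\ f x = x.

Definition plane_orth_hyperplane (T S : hset) : Prop :=
  exists (V : 'M[R]_5) (n : vec), \rank V = 3 /\
    seteq T (fun x => hyp x /\ (x <= V)%MS) /\ normal_of n S /\ (n <= V)%MS.

End H4.

(* In the hyperboloid model a plane P is cut out by a 3-dimensional subspace VP of
   R^{4,1}, and a half-turn about P is the product of the reflections in any two
   orthogonal spacelike normals spanning the Lorentz complement of VP.  As P and Q
   meet in a line, VP + VQ is 4-dimensional, with a spacelike normal u orthogonal to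
   both planes.  Taking u as one of the two normals gives H_P = r_a r_u and
   H_Q = r_u r_b, hence H_P H_Q = r_a r_b.  Its fixed set is cut out by the
   Lorentz complement of a and b: a plane containing P \cap Q and u, the normal of
   the hyperplane spanned by P and Q. *)

From mathcomp Require Import all_boot all_order all_algebra.
From mathcomp Require Import ring lra.
Set Implicit Arguments. Unset Strict Implicit. Unset Printing Implicit Defensive.
Import Order.TTheory GRing.Theory Num.Theory.
Local Open Scope ring_scope.

Section Minkowski.
Variable R : rcfType.
Local Notation vec := (vec R).
Local Notation J := (minkJ R).

Lemma tr_minkJ : J^T = J.
Proof. by rewrite /minkJ tr_diag_mx. Qed.

Lemma row_free_minkJ : row_free J.
Proof.
have JJ : J *m J = 1%:M.
  rewrite /minkJ mulmx_diag; apply/matrixP => i j; rewrite !mxE.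
  by case: (i == j) => //; case: (_ == ord_max); rewrite ?mulrNN mulr1.
by rewrite -row_leq_rank -{1}(mxrank1 R 5) -JJ mxrankM_maxl.
Qed.

Lemma mink_sum (x y : vec) :
  mink x y = \sum_(i < 5) x 0 i * y 0 i * (if i == ord_max then -1 else 1).
Proof.
rewrite /mink /minkJ mxE; apply: eq_bigr => i _.
rewrite !mxE (bigD1 i) //= big1 ?addr0; last first.
  by move=> j /negbTE ji; rewrite !mxE eq_sym ji mulr0n !(mulr0, mul0r).
by rewrite !mxE eqxx mulr1n mulrAC.
Qed.

Lemma minkC (x y : vec) : mink x y = mink y x.
Proof. by rewrite !mink_sum; apply: eq_bigr => i _; rewrite (mulrC (x 0 i)). Qed.

Lemma minkDl (x y z : vec) : mink (x + y) z = mink x z + mink y z.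
Proof. by rewrite /mink !mulmxDl mxE. Qed.

Lemma minkZl (k : R) (x z : vec) : mink (k *: x) z = k * mink x z.
Proof. by rewrite /mink -!scalemxAl mxE. Qed.

Lemma minkNl (x z : vec) : mink (- x) z = - mink x z.
Proof. by rewrite -scaleN1r minkZl mulN1r. Qed.

Lemma minkBl (x y z : vec) : mink (x - y) z = mink x z - mink y z.
Proof. by rewrite minkDl minkNl. Qed.

Lemma minkDr (x y z : vec) : mink z (x + y) = mink z x + mink z y.
Proof. by rewrite minkC minkDl !(minkC z). Qed.

Lemma minkZr (k : R) (x z : vec) : mink z (k *: x) = k * mink z x.
Proof. by rewrite minkC minkZl minkC. Qed.

Lemma minkNr (x z : vec) : mink z (- x) = - mink z x.
Proof. by rewrite minkC minkNl minkC. Qed.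

Lemma minkBr (x y z : vec) : mink z (x - y) = mink z x - mink z y.
Proof. by rewrite minkDr minkNr. Qed.

Lemma mink0l (z : vec) : mink 0 z = 0.
Proof. by rewrite -(scale0r 0) minkZl mul0r. Qed.

Definition minkE := (minkDl, minkBl, minkZl, minkNl, minkDr, minkBr, minkZr, minkNr).

Lemma mink_time0 (w : vec) : w 0 ord_max = 0 -> mink w w = \sum_(i < 5) w 0 i ^+ 2.
Proof.
move=> w4; rewrite mink_sum; apply: eq_bigr => i _.
by case: eqP => [->|_] /=; rewrite expr2 ?w4 ?mul0r ?mulr1.
Qed.

Lemma mink_time0_ge0 (w : vec) : w 0 ord_max = 0 -> 0 <= mink w w.
Proof. by move/mink_time0 ->; apply: sumr_ge0 => i _; apply: sqr_ge0. Qed.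

Lemma mink_time0_eq0 (w : vec) : w 0 ord_max = 0 -> mink w w = 0 -> w = 0.
Proof.
move/mink_time0 -> => /eqP; rewrite psumr_eq0 => [/allP w0|i _]; last exact: sqr_ge0.
by apply/rowP => i; rewrite !mxE; apply/eqP; rewrite -sqrf_eq0; apply: (implyP (w0 i _)).
Qed.

Lemma timelike_time_neq0 (x : vec) : mink x x < 0 -> x 0 ord_max != 0.
Proof. by apply: contraTneq => /mink_time0_ge0; rewrite leNgt => /negbTE ->. Qed.

Lemma orth_timelike_eq0 (x p : vec) :
  mink x x < 0 -> mink p x = 0 -> mink p p <= 0 -> p = 0.
Proof.
move=> xx px pp; set t := x 0 ord_max; set s := p 0 ord_max.
have t0 : t != 0 by apply: timelike_time_neq0.
set w := t *: p - s *: x.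
have w4 : w 0 ord_max = 0 by rewrite !mxE mulrC subrr.
have ww : mink w w = t ^+ 2 * mink p p + s ^+ 2 * mink x x.
  by rewrite /w !minkE (minkC x p) px; ring.
have w0 := mink_time0_ge0 w4.
have tp : t ^+ 2 * mink p p <= 0 by rewrite mulr_ge0_le0 ?sqr_ge0.
have sx : s ^+ 2 * mink x x <= 0 by rewrite mulr_ge0_le0 ?sqr_ge0 ?ltW.
have s0 : s = 0.
  apply/eqP; rewrite -sqrf_eq0; apply/eqP.
  have : s ^+ 2 * mink x x = 0 by lra.
  by move/eqP; rewrite mulf_eq0 (negbTE (ltr0_neq0 xx)) orbF => /eqP.
have : w = 0 by apply: mink_time0_eq0 => //; rewrite ww s0; lra.
by rewrite /w s0 scale0r subr0 => /eqP; rewrite scaler_eq0 (negbTE t0) => /eqP.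
Qed.

Definition perp m (A : 'M[R]_(m, 5)) : 'M[R]_5 := kermx ((A *m J)^T).

Lemma sub_perp m n (A : 'M[R]_(m, 5)) (B : 'M[R]_(n, 5)) :
  (A <= perp B)%MS = (A *m J *m B^T == 0).
Proof. by rewrite /perp sub_kermx trmx_mul tr_minkJ mulmxA. Qed.

Lemma sub_perpC m n (A : 'M[R]_(m, 5)) (B : 'M[R]_(n, 5)) :
  (A <= perp B)%MS = (B <= perp A)%MS.
Proof. by rewrite !sub_perp -trmx_eq0 !trmx_mul trmxK tr_minkJ mulmxA. Qed.

Lemma perp_vecP (x u : vec) : reflect (mink x u = 0) (x <= perp u)%MS.
Proof.
rewrite sub_perp; apply: (iffP eqP) => [xu0 | xu]; first by rewrite /mink xu0 mxE.
by apply/matrixP => i j; rewrite !ord1 [RHS]mxE.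
Qed.

Lemma perp_addsP (x a b : vec) :
  (x <= perp (a + b)%MS)%MS <-> mink x a = 0 /\ mink x b = 0.
Proof.
rewrite sub_perpC addsmx_sub -!(sub_perpC x).
by split => [/andP [/perp_vecP xa /perp_vecP xb] | [/perp_vecP xa /perp_vecP xb]] //; apply/andP.
Qed.

Lemma rank_perp m (A : 'M[R]_(m, 5)) : \rank (perp A) = (5 - \rank A)%N.
Proof. by rewrite /perp mxrank_ker mxrank_tr mxrankMfree // row_free_minkJ. Qed.

Lemma rank4_normal (V : 'M[R]_5) :
  \rank V = 4%N -> exists2 u : vec, u != 0 & (V <= perp u)%MS.
Proof.
move=> rV; exists (nz_row (perp V)); last by rewrite sub_perpC nz_row_sub.
by rewrite nz_row_eq0 -mxrank_eq0 rank_perp rV.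
Qed.

Lemma rank_perp_vec (u : vec) : u != 0 -> \rank (perp u) = 4%N.
Proof. by move=> u0; rewrite rank_perp rank_rV u0. Qed.

Lemma hyp_timelike (x : vec) : hyp x -> mink x x < 0.
Proof. by case=> -> _; rewrite ltrN10. Qed.

Lemma timelike_submx m1 m2 (A : 'M[R]_(m1, 5)) (B : 'M[R]_(m2, 5)) :
  (forall x, hyp x -> (x <= A)%MS -> (x <= B)%MS) ->
  forall y : vec, (y <= A)%MS -> mink y y < 0 -> (y <= B)%MS.
Proof.
move=> hAB y yA yy; have y4 := timelike_time_neq0 yy.
set k := Num.sqrt (- mink y y).
have k0 : 0 < k by rewrite sqrtr_gt0 oppr_gt0.
set c := Num.sg (y 0 ord_max) / k.
have c0 : c != 0 by rewrite mulf_neq0 ?sgr_eq0 // invr_neq0 // gt_eqF.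
have cyB : (c *: y <= B)%MS.
  apply: hAB; last by rewrite scalemx_sub.
  split; last by rewrite mxE /c mulrAC -normrEsg divr_gt0 ?normr_gt0.
  rewrite minkZl minkZr mulrA -expr2 expr_div_n sqr_sg y4 sqr_sqrtr ?oppr_ge0 ?ltW //.
  by rewrite mulr1n mul1r invrN mulNr mulVf // ltr0_neq0.
by rewrite -[y](scalerK c0) scalemx_sub.
Qed.

Lemma hyp_submx m1 m2 (A : 'M[R]_(m1, 5)) (B : 'M[R]_(m2, 5)) :
  (exists x, hyp x /\ (x <= A)%MS) ->
  (forall x, hyp x -> (x <= A)%MS -> (x <= B)%MS) -> (A <= B)%MS.
Proof.
move=> [x0 [[x0x0 _] x0A]] hAB; have tB := timelike_submx hAB.
have x0B : (x0 <= B)%MS by apply: tB => //; rewrite x0x0 ltrN10.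
(* Rescale [v] to [w] with [mink w w < 1]: the Lorentz norms of [x0 + w] and
   [x0 - w] add up to [2 (mink w w - 1) < 0], so one of them is timelike. *)
apply/rV_subP => v vA; set c := 1 + `|mink v v|.
have c0 : 0 < c by rewrite ltr_pwDl ?normr_ge0.
set w := c^-1 *: v.
have ww : mink w w < 1.
  rewrite /w minkZl minkZr mulrA -expr2 exprVn mulrC ltr_pdivrMr ?exprn_gt0 // mul1r.
  by have := ler_norm (mink v v); have := normr_ge0 (mink v v); rewrite /c; nra.
have wA : (w <= A)%MS by rewrite scalemx_sub.
have -> : v = c *: w by rewrite scalerA mulfV ?gt_eqF // scale1r.
apply: scalemx_sub; clearbody w.
have sum : mink (x0 + w) (x0 + w) + mink (x0 - w) (x0 - w) = 2 * (mink w w - 1).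
  by rewrite !minkE (minkC w x0) x0x0; ring.
have [pos | nonneg] := ltP (mink (x0 + w) (x0 + w)) 0.
  rewrite -(addKr x0 w); apply: addmx_sub; first by rewrite eqmx_opp.
  by apply: tB => //; apply: addmx_sub.
have neg : mink (x0 - w) (x0 - w) < 0.
  by move: sum nonneg ww; lra.
rewrite -(subKr x0 w); apply: addmx_sub => //; rewrite eqmx_opp.
by apply: tB => //; apply: addmx_sub; rewrite ?eqmx_opp.
Qed.

Lemma hrefl_id (n x : vec) : mink x n = 0 -> hrefl n x = x.
Proof. by move=> xn; rewrite /hrefl xn mulr0 mul0r scale0r subr0. Qed.

Lemma hreflK (n : vec) : mink n n != 0 -> involutive (hrefl n).
Proof.
move=> nn x; rewrite {1}/hrefl minkBl minkZl /hrefl.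
have -> : 2 * (mink x n - 2 * mink x n / mink n n * mink n n) / mink n n =
          - (2 * mink x n / mink n n) by field.
by rewrite scaleNr opprK subrK.
Qed.

Lemma hrefl2E (n m x : vec) : mink n m = 0 ->
  hrefl n (hrefl m x) = x - (2 * mink x m / mink m m) *: m - (2 * mink x n / mink n n) *: n.
Proof.
by move=> nm; rewrite {1}/hrefl minkBl minkZl (minkC m n) nm mulr0 subr0.
Qed.

Lemma hrefl_comm (n m x : vec) : mink n m = 0 -> hrefl n (hrefl m x) = hrefl m (hrefl n x).
Proof. by move=> nm; rewrite hrefl2E // [RHS]hrefl2E 1?addrAC // minkC. Qed.

Section Pencil.

Variables (n1 n2 : vec) (a1 a2 : R).
Hypotheses (n12 : mink n1 n2 = 0) (N1 : 0 < mink n1 n1) (N2 : 0 < mink n2 n2).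
Hypothesis a_neq0 : (a1 != 0) || (a2 != 0).

Let u := a1 *: n1 + a2 *: n2.
(* [a] spans the orthogonal complement of [u] in the pencil of [n1] and [n2]. *)
Let a := (a2 * mink n2 n2) *: n1 - (a1 * mink n1 n1) *: n2.
Let D := a1 ^+ 2 * mink n1 n1 + a2 ^+ 2 * mink n2 n2.

Let n21 : mink n2 n1 = 0. Proof. by rewrite minkC. Qed.

Lemma pencil_norm_gt0 : 0 < D.
Proof.
have t1 : 0 <= a1 ^+ 2 * mink n1 n1 by rewrite mulr_ge0 ?sqr_ge0 ?ltW.
have t2 : 0 <= a2 ^+ 2 * mink n2 n2 by rewrite mulr_ge0 ?sqr_ge0 ?ltW.
case/orP: a_neq0 => a0.
  have : 0 < a1 ^+ 2 * mink n1 n1 by rewrite mulr_gt0 // exprn_even_gt0.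
  rewrite /D; lra.
have : 0 < a2 ^+ 2 * mink n2 n2 by rewrite mulr_gt0 // exprn_even_gt0.
rewrite /D; lra.
Qed.

Lemma pencil_normE : mink u u = D /\ mink a a = mink n1 n1 * mink n2 n2 * D /\ mink a u = 0.
Proof. by rewrite /u /a /D !minkE n12 n21; split; [|split]; ring. Qed.

Lemma pencil_orthE (x : vec) :
  mink x a = 0 /\ mink x u = 0 <-> mink x n1 = 0 /\ mink x n2 = 0.
Proof.
rewrite /u /a !minkE; split => [[xa xu] | [-> ->]]; last by split; ring.
have D0 : D != 0 by rewrite gt_eqF // pencil_norm_gt0.
(* Cramer's rule: the linear system in [mink x n1], [mink x n2] has determinant [D]. *)
have e1 : mink x n1 * D = a2 * (a2 * mink n2 n2 * mink x n1 - a1 * mink n1 n1 * mink x n2)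
  + a1 * mink n1 n1 * (a1 * mink x n1 + a2 * mink x n2) by rewrite /D; ring.
have e2 : mink x n2 * D = a2 * mink n2 n2 * (a1 * mink x n1 + a2 * mink x n2)
  - a1 * (a2 * mink n2 n2 * mink x n1 - a1 * mink n1 n1 * mink x n2) by rewrite /D; ring.
by split; apply: (mulIf D0); rewrite mul0r ?e1 ?e2 xa xu; ring.
Qed.

Lemma pencil_hrefl (x : vec) : hrefl n1 (hrefl n2 x) = hrefl a (hrefl u x).
Proof.
have [uu [aa au]] := pencil_normE.
have D0 : D != 0 by rewrite gt_eqF // pencil_norm_gt0.
have xu : mink x u = a1 * mink x n1 + a2 * mink x n2 by rewrite /u !minkE.
have xa : mink x a = a2 * mink n2 n2 * mink x n1 - a1 * mink n1 n1 * mink x n2.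
  by rewrite /a !minkE.
move: D0; rewrite !hrefl2E // uu aa xu xa /u /a /D => D0.
by apply/rowP => i; rewrite !mxE; field; rewrite D0 !gt_eqF.
Qed.

End Pencil.

Definition htrace (V : 'M[R]_5) : hset R := fun x => hyp x /\ (x <= V)%MS.

Lemma tg_subspace_htrace (k : nat) (V : 'M[R]_5) :
  \rank V = k.+1 -> (exists x, htrace V x) -> tg_subspace k (htrace V).
Proof. by move=> rV hV; exists V. Qed.

Definition orth_frame (V : 'M[R]_5) (n1 n2 : vec) : Prop :=
  [/\ 0 < mink n1 n1, 0 < mink n2 n2, mink n1 n2 = 0 &
      forall x, (x <= V)%MS <-> mink x n1 = 0 /\ mink x n2 = 0].

Lemma half_turn_frame (P : hset R) (h : vec -> vec) (V : 'M[R]_5) :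
  (exists x, htrace V x) -> seteq P (htrace V) -> is_half_turn P h ->
  exists n1 n2, orth_frame V n1 n2 /\ forall x, h x = hrefl n1 (hrefl n2 x).
Proof.
move=> hV eP [H1 [H2 [n1 [n2 [[N1 e1] [[N2 e2] [n12 [eI hE]]]]]]]].
exists n1, n2; split => //; split => // x.
have onV y : hyp y -> (y <= V)%MS <-> (y <= perp (n1 + n2)%MS)%MS.
  move=> hy; rewrite perp_addsP; split => [yV | [y1 y2]].
    by have [/e1 [_ ->] /e2 [_ ->]] : hinter H1 H2 y by apply/eI/eP.
  by have /eI/eP [] : hinter H1 H2 y by split; [apply/e1 | apply/e2].
have [Vn n12V] : (V <= perp (n1 + n2)%MS)%MS /\ (perp (n1 + n2)%MS <= V)%MS.
  have [y [hy yV]] := hV; split; apply: hyp_submx => [|z hz]; try by move/(onV z hz).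
    by exists y.
  by exists y; split; last by apply/onV.
by rewrite -perp_addsP; split => xV; apply: submx_trans xV _.
Qed.

Lemma orth_frame_span (V : 'M[R]_5) (n1 n2 u : vec) :
  (exists x, htrace V x) -> orth_frame V n1 n2 -> (V <= perp u)%MS ->
  u = (mink u n1 / mink n1 n1) *: n1 + (mink u n2 / mink n2 n2) *: n2.
Proof.
move=> [x0 [hx0 x0V]] [N1 N2 n12 VE] Vu.
set p := u - ((mink u n1 / mink n1 n1) *: n1 + (mink u n2 / mink n2 n2) *: n2).
have pV : (p <= V)%MS.
  apply/VE; rewrite /p !minkE (minkC n2 n1) n12.
  by split; field; rewrite !gt_eqF.
have p_orthV y : (y <= V)%MS -> mink p y = 0.
  move=> yV; have [y1 y2] := (VE y).1 yV.
  have uy : mink u y = 0 by rewrite minkC; apply/perp_vecP; apply: submx_trans yV Vu.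
  by rewrite /p !minkE (minkC n1) (minkC n2) y1 y2 uy; ring.
apply/eqP; rewrite -subr_eq0; apply/eqP.
apply: (orth_timelike_eq0 (hyp_timelike hx0)); first exact: p_orthV.
by rewrite p_orthV.
Qed.

Lemma half_turn_frame_through (P : hset R) (h : vec -> vec) (V : 'M[R]_5) (u : vec) :
  (exists x, htrace V x) -> seteq P (htrace V) -> is_half_turn P h ->
  u != 0 -> (V <= perp u)%MS ->
  exists a, orth_frame V a u /\ forall x, h x = hrefl a (hrefl u x).
Proof.
move=> hV eP hP u0 Vu.
have [n1 [n2 [[N1 N2 n12 VE] hE]]] := half_turn_frame hV eP hP.
have := orth_frame_span hV (And4 N1 N2 n12 VE) Vu.
set a1 := _ / mink n1 n1; set a2 := _ / mink n2 n2; clearbody a1 a2 => uE; subst u.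
have a12 : (a1 != 0) || (a2 != 0).
  by apply: contraNT u0; rewrite negb_or !negbK => /andP [/eqP -> /eqP ->]; rewrite !scale0r addr0.
have [uu [aa au]] := pencil_normE a1 a2 n12.
have D0 := pencil_norm_gt0 N1 N2 a12.
exists ((a2 * mink n2 n2) *: n1 - (a1 * mink n1 n1) *: n2); split.
  split=> [||//|x]; rewrite ?aa ?uu ?mulr_gt0 //.
  by rewrite VE pencil_orthE.
by move=> x; rewrite hE (pencil_hrefl n12 N1 N2 a12).
Qed.

Lemma orth_frame_common_sub (VP VQ : 'M[R]_5) (a b u : vec) :
  orth_frame VP a u -> orth_frame VQ b u -> (b <= a)%MS -> (VP <= VQ)%MS.
Proof.
move=> [_ _ _ EP] [_ _ _ EQ] ba; apply/rV_subP => x /EP [xa xu]; apply/EQ; split => //.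
apply/perp_vecP; rewrite sub_perpC; apply: submx_trans ba _.
by rewrite -sub_perpC; apply/perp_vecP.
Qed.

Lemma rank_perp_adds (a b : vec) : a != 0 -> ~ (b <= a)%MS -> \rank (perp (a + b)%MS) = 3%N.
Proof.
move=> a0 nba; have r1 : \rank a = 1%N by rewrite rank_rV a0.
have ub : (\rank (a + b) <= 2)%N.
  by apply: leq_trans (mxrank_adds_leqif a b).1 _; rewrite r1 add1n ltnS rank_leq_row.
have lb : (1 < \rank (a + b))%N.
  have [le eq] := mxrank_leqif_sup (addsmxSl a b).
  rewrite r1 in le eq; rewrite ltn_neqAle le andbT eq addsmx_sub submx_refl.
  exact/negP.
by rewrite rank_perp; have /eqP -> : \rank (a + b) == 2%N by rewrite eqn_leq ub lb.
Qed.

Lemma hrefl2_fix (a b x : vec) : mink a a != 0 -> mink b b != 0 -> ~ (b <= a)%MS ->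
  hrefl a (hrefl b x) = x <-> mink x a = 0 /\ mink x b = 0.
Proof.
move=> aa bb nba; split => [fx | [xa xb]]; last by rewrite !hrefl_id.
have coef0 (m n : R) : n != 0 -> 2 * m / n = 0 -> m = 0.
  by move=> n0 /eqP; rewrite !mulf_eq0 invr_eq0 (negbTE n0) pnatr_eq0 orbF => /eqP.
have : hrefl b x = hrefl a x by rewrite -[in RHS]fx hreflK.
rewrite /hrefl => /addrI /oppr_inj.
have a0 : a != 0 by apply: contra_neq aa => ->; apply: mink0l.
have [cb0 | cb0 e] := eqVneq (2 * mink x b / mink b b) 0.
  rewrite cb0 scale0r => /esym/eqP; rewrite scaler_eq0 (negbTE a0) orbF => /eqP ca0.
  by split; [apply: coef0 ca0 | apply: coef0 cb0].
by case: nba; rewrite -(scalerK cb0 b) e !scalemx_sub.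
Qed.

Lemma hrefl2_type_I (f : vec -> vec) (a b x0 : vec) :
  0 < mink a a -> 0 < mink b b -> ~ (b <= a)%MS -> htrace (perp (a + b)%MS) x0 ->
  (forall x, f x = hrefl a (hrefl b x)) -> type_I_elliptic f.
Proof.
move=> aa bb nba [hx0 /perp_addsP [x0a x0b]] fE.
have a0 : a != 0 by apply: contraTneq aa => ->; rewrite mink0l ltxx.
exists (fun x => hyp x /\ mink x a = 0), (fun x => hyp x /\ mink x b = 0), a, b.
split; first by []; split; first by []; split; last split; last by move=> x _.
  move=> eab; have ab : (perp a <= perp b)%MS.
    apply: hyp_submx => [|x hx /perp_vecP xa]; first by exists x0; split => //; apply/perp_vecP.
    by apply/perp_vecP; case: ((eab x).1 (conj hx xa)).
  have : (perp a <= perp (a + b)%MS)%MS.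
    apply/rV_subP => v va; apply/perp_addsP; split; apply/perp_vecP => //.
    exact: submx_trans va ab.
  by move/mxrankS; rewrite rank_perp_vec // rank_perp_adds.
exists (perp (a + b)%MS); split; first exact: rank_perp_adds.
split; first by exists x0; split => //; apply/perp_addsP.
by move=> x; rewrite perp_addsP; split => [[[hx ?] [_ ?]] | [hx [? ?]]].
Qed.

Lemma fixpts_hrefl2 (f : vec -> vec) (a b : vec) :
  mink a a != 0 -> mink b b != 0 -> ~ (b <= a)%MS ->
  (forall x, f x = hrefl a (hrefl b x)) -> seteq (fixpts f) (htrace (perp (a + b)%MS)).
Proof.
by move=> aa bb nba fE x; rewrite /fixpts /htrace fE hrefl2_fix // perp_addsP.
Qed.

Lemma htrace_submx (Z S : hset R) (V W : 'M[R]_5) :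
  (exists x, htrace V x) -> seteq Z (htrace V) -> seteq S (htrace W) -> hsubs Z S ->
  (V <= W)%MS.
Proof.
move=> hV eZ eS ZS; apply: hyp_submx hV _ => x hx xV.
by have /eS [] := ZS x ((eZ x).2 (conj hx xV)).
Qed.

Lemma rank_adds_planes (P Q : hset R) (VP VQ VL : 'M[R]_5) :
  \rank VP = 3%N -> \rank VQ = 3%N -> \rank VL = 2%N -> (exists x, htrace VL x) ->
  seteq P (htrace VP) -> seteq Q (htrace VQ) -> seteq (hinter P Q) (htrace VL) ->
  \rank (VP + VQ)%MS = 4%N.
Proof.
move=> rP rQ rL [xL hxL] eP eQ eL.
have onPQ x : htrace VL x -> htrace (VP :&: VQ)%MS x.
  by case/eL => [/eP [hx xP] /eQ [_ xQ]]; split; rewrite ?sub_capmx ?xP.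
have capE : (VL == VP :&: VQ)%MS.
  apply/andP; split; apply: hyp_submx => [|x hx xV];
    try by exists xL; try apply: onPQ.
    by case: (onPQ x (conj hx xV)).
  move: xV; rewrite sub_capmx => /andP [xP xQ].
  by have [] : htrace VL x by apply/eL; split; [apply/eP | apply/eQ].
have := mxrank_sum_cap VP VQ; rewrite rP rQ -(eqmx_rank capE) rL => sum.
by apply/eqP; rewrite -(eqn_add2r 2) sum.
Qed.

Lemma hyperplane_normal (P Q S : hset R) (VP VQ : 'M[R]_5) (u : vec) :
  (exists x, htrace VP x) -> (exists x, htrace VQ x) ->
  seteq P (htrace VP) -> seteq Q (htrace VQ) -> \rank (VP + VQ)%MS = 4%N ->
  (VP + VQ <= perp u)%MS -> u != 0 ->
  is_hyperplane S -> hsubs P S -> hsubs Q S -> seteq S (fun x => hyp x /\ mink x u = 0).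
Proof.
move=> hP hQ eP eQ rU Uu u0 [W [rW [_ eS]]] PS QS.
have UW : (VP + VQ <= W)%MS.
  by rewrite addsmx_sub (htrace_submx hP eP eS PS) (htrace_submx hQ eQ eS QS).
have Wu : (W <= perp u)%MS.
  by apply: submx_trans Uu; rewrite -(mxrank_leqif_sup UW).2 rU rW.
have uW : (perp u <= W)%MS by rewrite -(mxrank_leqif_sup Wu).2 rW rank_perp_vec.
move=> x; rewrite eS; split=> [[hx xW] | [hx /perp_vecP xu]]; split => //.
  by apply/perp_vecP; apply: submx_trans xW Wu.
exact: submx_trans xu uW.
Qed.

Lemma orth_frame_sub_perp (V : 'M[R]_5) (a u : vec) : orth_frame V a u -> (V <= perp u)%MS.
Proof. by case=> _ _ _ EV; apply/rV_subP => x /EV [_ /perp_vecP]. Qed.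

Section HalfTurnProduct.

Variables (P Q : hset R) (VP VQ : 'M[R]_5) (a b u xL : vec) (f : vec -> vec).
Hypotheses (eP : seteq P (htrace VP)) (eQ : seteq Q (htrace VQ)).
Hypotheses (Fa : orth_frame VP a u) (Fb : orth_frame VQ b u).
Hypotheses (xLP : htrace VP xL) (xLQ : htrace VQ xL).
Hypotheses (rU : \rank (VP + VQ)%MS = 4%N) (nba : ~ (b <= a)%MS).
Hypothesis fE : forall x, f x = hrefl a (hrefl b x).

Let aa : 0 < mink a a. Proof. by case: Fa. Qed.
Let bb : 0 < mink b b. Proof. by case: Fb. Qed.
Let a0 : a != 0. Proof. by apply: contraTneq aa => ->; rewrite mink0l ltxx. Qed.
Let u0 : u != 0.
Proof. by case: Fa => _ uu _ _; apply: contraTneq uu => ->; rewrite mink0l ltxx. Qed.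
Let Uu : (VP + VQ <= perp u)%MS.
Proof. by rewrite addsmx_sub (orth_frame_sub_perp Fa) (orth_frame_sub_perp Fb). Qed.

Let onP x : (x <= VP)%MS -> mink x a = 0.
Proof. by move=> xP; case: Fa => _ _ _ /(_ x) [/(_ xP) []]. Qed.
Let onQ x : (x <= VQ)%MS -> mink x b = 0.
Proof. by move=> xQ; case: Fb => _ _ _ /(_ x) [/(_ xQ) []]. Qed.

Let xL_twist : htrace (perp (a + b)%MS) xL.
Proof.
by case: xLP xLQ => hx xP [_ xQ]; split => //; apply/perp_addsP; split; [apply: onP | apply: onQ].
Qed.

Lemma product_type_I : type_I_elliptic f.
Proof. exact: hrefl2_type_I aa bb nba xL_twist fE. Qed.

Lemma product_hyperplane : exists S, is_hyperplane S /\ hsubs P S /\ hsubs Q S.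
Proof.
have [Pu Qu] := (orth_frame_sub_perp Fa, orth_frame_sub_perp Fb).
exists (htrace (perp u)); split.
  apply: tg_subspace_htrace; first exact: rank_perp_vec.
  by exists xL; case: xLP => hx xP; split => //; apply: submx_trans Pu.
by split => x; [move/eP | move/eQ] => -[hx xV]; split => //; apply: submx_trans xV _.
Qed.

Lemma product_twisting_plane : exists T : hset R,
  is_plane T /\ seteq (fixpts f) T /\ hsubs (hinter P Q) T /\
  forall S, is_hyperplane S -> hsubs P S -> hsubs Q S -> plane_orth_hyperplane T S.
Proof.
exists (htrace (perp (a + b)%MS)); split.
  by apply: tg_subspace_htrace; [exact: rank_perp_adds | exists xL].
split; first by apply: fixpts_hrefl2; rewrite ?gt_eqF.
split.
  move=> x [/eP [hx xP] /eQ [_ xQ]]; split => //.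
  by apply/perp_addsP; split; [apply: onP | apply: onQ].
move=> S hS PS QS; exists (perp (a + b)%MS), u; split; first exact: rank_perp_adds.
split; first by [].
have [[_ uu au _] [_ _ bu _]] := (Fa, Fb).
split; first split => //.
  exact: hyperplane_normal (ex_intro _ xL xLP) (ex_intro _ xL xLQ) eP eQ rU Uu u0 hS PS QS.
by apply/perp_addsP; rewrite !(minkC u).
Qed.

End HalfTurnProduct.

End Minkowski.

Theorem lemma6p5 (R : rcfType) (P Q : hset R) (hP hQ : vec R -> vec R) :
  is_plane P -> is_plane Q -> ~ seteq P Q -> is_line (hinter P Q) ->
  is_half_turn P hP -> is_half_turn Q hQ ->
  type_I_elliptic (fun x : vec R => hP (hQ x)) /\
  (exists S : hset R, is_hyperplane S /\ hsubs P S /\ hsubs Q S) /\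
  exists T : hset R,
    is_plane T /\ seteq (fixpts (fun x : vec R => hP (hQ x))) T /\
    hsubs (hinter P Q) T /\
    forall S : hset R, is_hyperplane S -> hsubs P S -> hsubs Q S ->
      plane_orth_hyperplane T S.
Proof.
move=> [VP [rP [_ eP]]] [VQ [rQ [_ eQ]]] nPQ [VL [rL [[xL hxL] eL]]] htP htQ.
have [/eP xLP /eQ xLQ] : hinter P Q xL by apply/eL.
have rU := rank_adds_planes rP rQ rL (ex_intro _ xL hxL) eP eQ eL.
have [u u0 Uu] := rank4_normal rU.
have [a [Fa hPE]] := half_turn_frame_through (ex_intro _ xL xLP) eP htP u0
  (submx_trans (addsmxSl _ _) Uu).
have [b [Fb hQE]] := half_turn_frame_through (ex_intro _ xL xLQ) eQ htQ u0
  (submx_trans (addsmxSr _ _) Uu).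
have hPQ x : hP (hQ x) = hrefl a (hrefl b x).
  have [[_ uu _ _] [_ _ bu _]] := (Fa, Fb).
  have -> : hQ x = hrefl u (hrefl b x) by rewrite hQE hrefl_comm.
  by rewrite hPE hreflK // gt_eqF.
have nba : ~ (b <= a)%MS.
  move/(orth_frame_common_sub Fa Fb) => PQ; apply: nPQ => x.
  have QP : (VQ <= VP)%MS by rewrite -(mxrank_leqif_sup PQ).2 rP rQ.
  by rewrite eP eQ; split => -[hx xV]; split => //; apply: submx_trans xV _.
split; first exact: product_type_I Fa Fb xLP xLQ nba hPQ.
split; first exact: product_hyperplane eP eQ Fa Fb xLP.
exact: product_twisting_plane eP eQ Fa Fb xLP xLQ rU nba hPQ.
Qed.
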